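(* Let $A$ be an $m\times n$ matrix with nonnegative entries in $[0,1]$ and no zero column, and let $H$ be the smallest nonzero entry of $A$. Then, for DIMSUM with parameter $\gamma$, the expected number of values emitted to any single key $(i,j)$ is at most $\gamma/H^2$ (independent of $m$).
   Context: Let $A=(a_{ki})$ be an $m\times n$ real matrix with rows $r_1,\dots,r_m$ and columns $c_1,\dots,c_n$; $\|c_i\|$ is the Euclidean norm of column $i$ (assumed nonzero). DIMSUM with parameter $\gamma>0$ is the following randomized procedure. For each pair of distinct column indices $(i,j)$ set $p_{ij}=\min\!\left(1,\frac{\gamma}{\|c_i\|\|c_j\|}\right)$. For each row $k$ and each pair $(i,j)$ with $a_{ki}a_{kj}\neq 0$, independently (over all $k$ and all pairs) with probability $p_{ij}$ the value $a_{ki}a_{kj}$ is emitted to key $(i,j)$ (one ''emission''). *)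

From HB Require Import structures.
From mathcomp Require Import all_boot all_order all_algebra.
Set Implicit Arguments. Unset Strict Implicit. Unset Printing Implicit Defensive.
Import Order.TTheory GRing.Theory Num.Theory.
Local Open Scope ring_scope.

Definition col_norm (R : rcfType) (m n : nat) (A : 'M[R]_(m, n)) (i : 'I_n) : R :=
  Num.sqrt (\sum_(k < m) A k i ^+ 2).

Definition dimsum_p (R : rcfType) (m n : nat) (A : 'M[R]_(m, n)) (gamma : R)
    (i j : 'I_n) : R :=
  Num.min 1 (gamma / (col_norm A i * col_norm A j)).

(* Expected number of emissions to key (i,j): the number of emissions is a sum,
   over rows k with a_ki a_kj <> 0, of independent Bernoulli(p_ij) indicators;
   by linearity its expectation is the sum of the success probabilities. *)
Definition dimsum_expected_emissions (R : rcfType) (m n : nat) (A : 'M[R]_(m, n))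
    (gamma : R) (i j : 'I_n) : R :=
  \sum_(k < m | A k i * A k j != 0) dimsum_p A gamma i j.

(* Every row counted for key (i,j) has a_ki, a_kj >= H, so if s rows are counted then
   ||c_i||^2, ||c_j||^2 >= s H^2 and hence ||c_i|| ||c_j|| >= s H^2.  Each of the s
   emissions happens with probability at most gamma / (||c_i|| ||c_j||), so the
   expected count is at most s gamma / (s H^2) = gamma / H^2. *)
From HB Require Import structures.
From mathcomp Require Import all_boot all_order all_algebra.
Import Order.TTheory GRing.Theory Num.Theory.
Local Open Scope ring_scope.

Lemma card_mul_sqr_le_sum_sqr {R : realDomainType} {I : finType} (P : {pred I})
    (F : I -> R) (c : R) :
  0 <= c -> {in P, forall k, c <= F k} -> #|P|%:R * c ^+ 2 <= \sum_k F k ^+ 2.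
Proof.
move=> c_ge0 cF; rewrite (bigID [in P]) /= -[leLHS]addr0 lerD ?sumr_ge0 //.
  rewrite mulr_natl -sumr_const; apply: ler_sum => k Pk.
  by rewrite ler_pXn2r ?nnegrE ?(le_trans c_ge0) ?cF.
by move=> k _; rewrite sqr_ge0.
Qed.

Lemma sqrt_card_mul_le_col_norm {R : rcfType} {m n : nat} (A : 'M[R]_(m, n))
    (i : 'I_n) (P : {pred 'I_m}) (c : R) :
  0 <= c -> {in P, forall k, c <= A k i} -> Num.sqrt #|P|%:R * c <= col_norm A i.
Proof.
move=> c_ge0 cA; rewrite -[c in leLHS]ger0_norm // -sqrtr_sqr -sqrtrM ?ler0n //.
by rewrite ler_sqrt ?sumr_ge0 ?card_mul_sqr_le_sum_sqr // => k _; rewrite sqr_ge0.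
Qed.

Lemma dimsum_expected_emissions_le {R : rcfType} {m n : nat} (A : 'M[R]_(m, n))
    (gamma : R) (i j : 'I_n) :
  dimsum_expected_emissions A gamma i j <=
  #|[pred k | A k i * A k j != 0]|%:R * (gamma / (col_norm A i * col_norm A j)).
Proof.
rewrite /dimsum_expected_emissions sumr_const -[leLHS]mulr_natl ler_wpM2l //.
by rewrite ge_min lexx orbT.
Qed.

Lemma natr_mul_divr_le {R : numFieldType} (s : nat) (g c D : R) :
  0 <= g -> 0 < c -> s%:R * c <= D -> s%:R * (g / D) <= g / c.
Proof.
move=> g_ge0 c_gt0 scD; have [-> | s_gt0] := posnP s.
  by rewrite mul0r divr_ge0 // ltW.
have sc_gt0 : 0 < s%:R * c by rewrite mulr_gt0 ?ltr0n.
rewrite -[leRHS](mulVKf (_ : s%:R != 0 :> R)) ?pnatr_eq0 -?lt0n // ler_wpM2l //.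
rewrite [leRHS]mulrCA -invfM ler_wpM2l // lef_pV2 ?posrE //.
exact: lt_le_trans scD.
Qed.

Theorem theorem6 (R : rcfType) (m n : nat) (A : 'M[R]_(m, n)) (gamma H : R) :
  0 < gamma ->
  (forall k i, 0 <= A k i <= 1) ->
  (forall i : 'I_n, exists k : 'I_m, A k i != 0) ->
  (* H is the smallest nonzero entry of A *)
  (exists k i, A k i != 0 /\ A k i = H) ->
  (forall k i, A k i != 0 -> H <= A k i) ->
  forall i j : 'I_n, i != j ->
    dimsum_expected_emissions A gamma i j <= gamma / H ^+ 2.
Proof.
move=> gamma_gt0 A01 _ [k0 [i0 [Ak0_neq0 Ak0_H]]] H_min i j _.
have H_gt0 : 0 < H by rewrite -Ak0_H lt0r Ak0_neq0; case/andP: (A01 k0 i0).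
have H_ge0 := ltW H_gt0.
set P := [pred k | A k i * A k j != 0].
have H_le_i : {in P, forall k, H <= A k i}.
  by move=> k; rewrite inE mulf_eq0 negb_or => /andP[/H_min].
have H_le_j : {in P, forall k, H <= A k j}.
  by move=> k; rewrite inE mulf_eq0 negb_or => /andP[_ /H_min].
have norms_ge : #|P|%:R * H ^+ 2 <= col_norm A i * col_norm A j.
  rewrite -(sqr_sqrtr (ler0n R #|P|)) -exprMn expr2.
  by rewrite ler_pM ?mulr_ge0 ?sqrtr_ge0 ?sqrt_card_mul_le_col_norm.
apply: le_trans (dimsum_expected_emissions_le A gamma i j) _.
by apply: natr_mul_divr_le norms_ge; rewrite ?exprn_gt0 ?ltW.
Qed.
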